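(* Let $D\ge2$ be fixed and $\lambda>0$. Let $\Gamma$ be a complete $D$-ary tree of depth $h\ge\bar h$ such that $K=o(n)$. Then for a realization $G$ of the graph under $\mathbb{P}_1$, the overlap of any estimator $\hat{\mathcal K}$ of the planted set satisfies $\mathrm{ov}(\hat{\mathcal K})\le(1-\delta)K$ for some $\delta>0$.
   Context: Model: $\mathbb{P}_1$: $G=G_0\cup G'$ with $G_0\sim\mathcal G(n,\lambda/n)$ and $G'$ the image of $\Gamma$ under an injection $\sigma$ of its vertex set into $[n]$ chosen uniformly at random independently of $G_0$; $\mathcal K$ is the image of $\sigma$. An estimator is a set $\hat{\mathcal K}$ of $K$ nodes computed from $G$; $\mathrm{ov}(\hat{\mathcal K})=\sum_{i\in[n]}\mathbb{P}_1(i\in\hat{\mathcal K}\cap\mathcal K)$. A complete $D$-ary tree of depth $h$ has root at depth $0$, each vertex at depth $<h$ has $D$ children, and $K=(D^{h+1}-1)/(D-1)$ vertices. $p_h$ is the probability that a Galton–Watson tree with offspring law $\mathrm{Poi}(\lambda)$ contains a complete $D$-ary tree of depth $h$ rooted at its root; $\bar h=\inf\{h>0:p_h<1/n\}$. *)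

From HB Require Import structures.
From mathcomp Require Import all_boot all_order all_algebra.
From mathcomp Require Import all_classical all_reals all_analysis.
Set Implicit Arguments. Unset Strict Implicit. Unset Printing Implicit Defensive.
Import Order.TTheory GRing.Theory Num.Theory.
Local Open Scope ring_scope.

Definition poisson_pmf (R : realType) (lam : R) (k : nat) : R :=
  expR (- lam) * lam ^+ k / (k`!)%:R.

Definition binom_tail (R : realType) (k : nat) (q : R) (D : nat) : R :=
  \sum_(D <= j < k.+1) ('C(k, j))%:R * q ^+ j * (1 - q) ^+ (k - j).

(* p_h = probability that a Galton-Watson tree with Poi(lam) offspring
   contains a complete D-ary tree of depth h rooted at its root.  Depth h+1: the root has
   k ~ Poi(lam) children whose subtrees are i.i.d. GW trees, and we need
   at least D of them to contain a complete D-ary tree of depth h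
   rooted at that child. *)
Fixpoint ptree (R : realType) (lam : R) (D : nat) (h : nat) : R :=
  match h with
  | 0 => 1
  | h'.+1 => limn (fun N : nat => \sum_(0 <= k < N) (poisson_pmf lam k * binom_tail k (ptree lam D h') D))
  end.

(* Number of vertices of a complete D-ary tree of depth h *)
Definition Ksize (D h : nat) : nat := ((D ^ h.+1 - 1) %/ (D - 1))%N.

(* A simple graph on 'I_n is represented by its edge set: a set of pairs
   (i, j) with i < j. *)
Definition pairs (n : nat) : {set 'I_n * 'I_n} := [set e : 'I_n * 'I_n | (e.1 < e.2)%N].

Definition upair (n : nat) (x y : 'I_n) : 'I_n * 'I_n :=
  if (x < y)%N then (x, y) else (y, x).

Definition er_prob (R : realType) (n : nat) (p : R) (E : {set 'I_n * 'I_n}) : R :=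
  if E \subset pairs n then
    \prod_(e in pairs n) (if e \in E then p else 1 - p)
  else 0.

(* Complete D-ary tree on vertex set 'I_K (BFS labelling): vertex a > 0
   has parent (a - 1) / D. With K = Ksize D h this is the complete D-ary
   tree of depth h rooted at 0. *)
Definition tree_edge (D K : nat) (a b : 'I_K) : bool :=
  (0 < a)%N && (nat_of_ord b == (a.-1 %/ D))%N.

Definition injs (n K : nat) : {set {ffun 'I_K -> 'I_n}} :=
  [set s : {ffun 'I_K -> 'I_n} | injectiveb s].

Definition planted_edges (n D K : nat) (s : {ffun 'I_K -> 'I_n}) :
  {set 'I_n * 'I_n} :=
  [set upair (s ab.1) (s ab.2) | ab in [set ab : 'I_K * 'I_K | tree_edge D ab.1 ab.2]].

Definition planted_set (n K : nat) (s : {ffun 'I_K -> 'I_n}) : {set 'I_n} :=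
  s @: [set: 'I_K].

(* ov(Khat) = sum_i P_1(i in Khat(G) /\ i in K) = E_1 |Khat(G) cap K|,
   where G = G0 cup sigma(Gamma), G0 ~ G(n, lam/n), sigma uniform injection
   independent of G0. *)
Definition overlap (R : realType) (n D K : nat) (lam : R)
  (f : {set 'I_n * 'I_n} -> {set 'I_n}) : R :=
  \sum_(E : {set 'I_n * 'I_n}) \sum_(s in injs n K)
     (er_prob (lam / n%:R) E / (#|injs n K|)%:R)
       * (#|f (E :|: planted_edges D s) :&: planted_set s|)%:R.

(* Call (l, v) a good pair when l is a leaf of the planted tree that is the
   first child of its parent p, v is a vertex outside the planted set, and the
   only edge of G_0 at sigma(l), at v, or from sigma(p) to the outside of the
   planted set, is sigma(p) v.  Exchanging the labels sigma(l) and v maps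
   (G_0, sigma) to an equally likely configuration with the same graph G, in
   which (l, sigma(l)) is good; an estimator sees the same G in both, so on
   average it errs once per good pair, either by missing sigma(l) or by
   choosing v.  In a good configuration l and v determine each other, so
   these errors are charged to distinct vertices and ov <= K - E[#good]/2.
   There are at least K/(2D) first-child leaves and n/2 outside vertices, and
   each pair is good with probability at least (lam/n) e^(-12 lam), whence
   delta = lam e^(-12 lam) / (8 D). *)

From HB Require Import structures.
From mathcomp Require Import all_boot all_order all_algebra.
From mathcomp Require Import all_classical all_reals all_analysis.
From mathcomp Require Import fingroup perm.
From mathcomp Require Import ring lra zify.
Import Order.TTheory GRing.Theory Num.Theory.
Set Implicit Arguments. Unset Strict Implicit. Unset Printing Implicit Defensive.
Local Open Scope ring_scope.

Lemma sum_involution (R : numFieldType) (T : finType) (P : pred T) (phi : T -> T)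
    (w g : T -> R) :
  {in P, forall x, P (phi x)} -> {in P, involutive phi} ->
  {in P, forall x, w (phi x) = w x} -> {in P, forall x, g x + g (phi x) = 2} ->
  \sum_(x | P x) w x * g x = \sum_(x | P x) w x.
Proof.
move=> P_phi phiK w_phi g_phi.
have sum_phi : \sum_(x | P x) w x * g x = \sum_(x | P x) w x * g (phi x).
  rewrite (reindex_onto phi phi); last by move=> x /phiK.
  apply: eq_big => [x|x /andP[Px /eqP eq_x]]; last by rewrite -(w_phi _ Px) eq_x.
  apply/andP/idP => [[/P_phi + /eqP eq_x]|Px]; first by rewrite eq_x.
  by rewrite P_phi // phiK.
apply: (@mulIf _ 2); first by rewrite pnatr_eq0.
rewrite mulr_natr mulr2n {2}sum_phi -big_split /= big_distrl /=.
by apply: eq_bigr => x Px; rewrite -mulrDr g_phi.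
Qed.

Lemma leq_sum_uniq (T : finType) (P : pred T) (c : nat) :
  {in P &, forall x y, x = y} -> (\sum_(x | P x) c <= c)%N.
Proof.
move=> P_uniq; rewrite sum_nat_cond_const -[leqRHS]mul1n leq_mul2r.
by apply/orP; right; apply/card_le1_eqP => x y; rewrite !inE => Px Py; apply/esym/P_uniq.
Qed.

Lemma sum_bool_card (T : finType) (P : pred T) : (\sum_(x : T) P x)%N = #|[set x | P x]|.
Proof. by rewrite -sum1dep_card [RHS]big_mkcond; apply: eq_bigr => x _; case: (P x). Qed.

Lemma sumr_if_const (R : numDomainType) (T : finType) (P : pred T) (b : R) :
  \sum_(x : T) (if P x then b else 0) = #|[set x | P x]|%:R * b.
Proof.
rewrite -big_mkcond /= sumr_const mulr_natl; congr (_ *+ _).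
by apply: eq_card => x; rewrite inE.
Qed.

Lemma expR_le_pow (R : realType) (x : R) (m : nat) :
  0 <= x <= 1 / 2 -> expR (- (2 * x * m%:R)) <= (1 - x) ^+ m.
Proof.
case/andP=> x0 x2.
have step : expR (- (2 * x)) <= 1 - x.
  rewrite expRN; have := expR_ge1Dx (2 * x); have := expR_gt0 (2 * x) => E0 E1.
  rewrite -(@ler_pM2r _ (expR (2 * x))) // mulVf ?gt_eqF //; nra.
rewrite -mulNr expRM_natr; apply: lerXn2r => //.
  by rewrite qualifE /= expR_ge0.
by rewrite qualifE /= subr_ge0; lra.
Qed.

Section Relabel.
Local Open Scope group_scope.
Variable n : nat.
Implicit Types (a b x : 'I_n) (e : 'I_n * 'I_n) (E : {set 'I_n * 'I_n}) (t : {perm 'I_n}).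

Definition touches x e : bool := (e.1 == x) || (e.2 == x).

Definition relabel t e : 'I_n * 'I_n := upair (t e.1) (t e.2).

Lemma in_pairs e : (e \in pairs n) = (e.1 < e.2)%N.
Proof. by rewrite inE. Qed.

Lemma pairs_neq e : e \in pairs n -> e.1 != e.2.
Proof. by rewrite in_pairs => lt12; rewrite neq_ltn lt12. Qed.

Lemma upairC a b : upair a b = upair b a.
Proof. by rewrite /upair; case: (ltngtP a b) => [//|//|/val_inj->]. Qed.

Lemma upair_pairs a b : a != b -> upair a b \in pairs n.
Proof.
move=> neq_ab; rewrite in_pairs /upair; case: (ltngtP a b) => //= eq_ab.
by move: neq_ab; rewrite (val_inj eq_ab) eqxx.
Qed.

Lemma upairE e : e \in pairs n -> upair e.1 e.2 = e.
Proof. by rewrite in_pairs /upair => ->; case: e. Qed.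

Lemma upairI a : injective (upair a).
Proof. by move=> b c; rewrite /upair; case: ifP; case: ifP => ? ? [] => *; congruence. Qed.

Lemma upair_or (P : pred 'I_n) a b :
  P (upair a b).1 || P (upair a b).2 = P a || P b.
Proof. by rewrite /upair; case: ifP => //= _; rewrite orbC. Qed.

Lemma touches_upair x a b : touches x (upair a b) = (a == x) || (b == x).
Proof. exact: (upair_or (pred1 x)). Qed.

Lemma relabel_upair t a b : relabel t (upair a b) = upair (t a) (t b).
Proof. by rewrite /relabel [upair a b]/upair; case: ifP => //= _; apply: upairC. Qed.

Lemma relabel_pairs t e : e \in pairs n -> relabel t e \in pairs n.
Proof. by move/pairs_neq=> neq12; apply: upair_pairs; rewrite (inj_eq perm_inj). Qed.

Lemma relabelM t t' e : relabel t (relabel t' e) = relabel (t' * t) e.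
Proof. by rewrite [relabel t' e]/relabel relabel_upair /relabel !permM. Qed.

Lemma relabelK t : {in pairs n, cancel (relabel t) (relabel t^-1)}.
Proof. by move=> e pe; rewrite relabelM mulgV /relabel !perm1 upairE. Qed.

Lemma relabelVK t : {in pairs n, cancel (relabel t^-1) (relabel t)}.
Proof. by move=> e pe; rewrite relabelM mulVg /relabel !perm1 upairE. Qed.

Lemma mem_relabel t E e : E \subset pairs n ->
  (e \in relabel t @: E) = (e \in pairs n) && (relabel t^-1 e \in E).
Proof.
move=> sEp; apply/imsetP/andP => [[e' e'E ->]|[pe eE]].
  have pe' := fintype.subsetP sEp _ e'E.
  by rewrite relabelK // e'E relabel_pairs.
by exists (relabel t^-1 e); rewrite ?relabelVK.
Qed.

Lemma relabel_sub t E : E \subset pairs n -> relabel t @: E \subset pairs n.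
Proof. by move=> sEp; apply/fintype.subsetP => e; rewrite mem_relabel // => /andP[]. Qed.

Lemma relabel_pairsE t : relabel t @: pairs n = pairs n.
Proof.
apply/setP => e; rewrite mem_relabel //.
by apply/andP/idP => [[]//|pe]; rewrite pe relabel_pairs.
Qed.

Lemma relabel_inj t : {in pairs n &, injective (relabel t)}.
Proof. by move=> e1 e2 p1 p2 eq12; rewrite -(relabelK t p1) eq12 relabelK. Qed.

Lemma relabel_setM t t' E : relabel t @: (relabel t' @: E) = relabel (t' * t) @: E.
Proof. by rewrite -imset_comp; apply: eq_imset => e; apply: relabelM. Qed.

Lemma relabel_set1 E : E \subset pairs n -> relabel 1 @: E = E.
Proof.
move=> sEp; rewrite -[RHS]imset_id; apply: eq_in_imset => e /(fintype.subsetP sEp).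
by rewrite /relabel !perm1 => /upairE.
Qed.

Lemma touches_relabel t x e : touches x (relabel t e) = touches (t^-1 x) e.
Proof.
rewrite /relabel touches_upair /touches.
by congr orb; apply/eqP/eqP => [<-|->]; rewrite ?permK ?permKV.
Qed.

Lemma relabel_tperm_id a b e : e \in pairs n ->
  ~~ touches a e -> ~~ touches b e -> relabel (tperm a b) e = e.
Proof.
rewrite /touches !negb_or => pe /andP[ne1a ne2a] /andP[ne1b ne2b].
by rewrite /relabel !tpermD 1?eq_sym ?upairE.
Qed.

End Relabel.

Lemma card_touches n (x : 'I_n) : (#|[set e | touches x e]| <= 2 * n)%N.
Proof.
have -> : [set e | touches x e] = [set (x, y) | y in 'I_n] :|: [set (y, x) | y in 'I_n].
  apply/setP => -[a b]; rewrite !inE /touches /=.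
  apply/orP/orP => [[/eqP->|/eqP->]|[/imsetP[y _ [-> _]]|/imsetP[y _ [_ ->]]]].
  - by left; apply/imsetP; exists b.
  - by right; apply/imsetP; exists a.
  - by left.
  - by right.
apply: leq_trans (leq_card_setU _ _) _.
rewrite mul2n -addnn; apply: leq_add;
  by apply: leq_trans (leq_imset_card _ _) _; rewrite card_ord.
Qed.

Section ErdosRenyi.
Variables (R : realType) (n : nat) (q : R).
Implicit Types (E J S T : {set 'I_n * 'I_n}).

Lemma er_prob_ge0 E : 0 <= q <= 1 -> 0 <= er_prob q E.
Proof.
case/andP=> q0 q1; rewrite /er_prob; case: ifP => // _.
by apply: prodr_ge0 => e _; case: ifP; rewrite ?subr_ge0.
Qed.

Lemma er_prob_relabel (t : {perm 'I_n}) E :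
  E \subset pairs n -> er_prob q (relabel t @: E) = er_prob q E.
Proof.
move=> sEp; rewrite /er_prob relabel_sub // sEp.
rewrite -{1}(relabel_pairsE t) big_imset /=; last exact: relabel_inj.
by apply: eq_bigr => e pe; rewrite mem_relabel // relabel_pairs // relabelK.
Qed.

Lemma prod_trace_indicator J S T : T \subset S -> S \subset pairs n ->
  \prod_(e in pairs n) (if e \in S then ((e \in J) == (e \in T))%:R else 1)
  = (J :&: S == T)%:R :> R.
Proof.
move=> sTS sSp.
have [e0 He0|eqJST] :=
  pickP (fun e : 'I_n * 'I_n => (e \in J :&: S) != (e \in T)); last first.
  have -> : J :&: S == T.
    by apply/eqP/setP => e; apply/eqP; move/negbFE: (eqJST e).
  apply: big1 => e _; case: ifP => // eS.
  by move/negbFE: (eqJST e); rewrite inE eS andbT => ->.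
have e0S : e0 \in S.
  apply: contraR He0 => e0S; rewrite inE (negbTE e0S) andbF.
  by apply/eqP/esym/negbTE; apply: contra e0S; apply: (fintype.subsetP sTS).
have -> : (J :&: S == T) = false by apply: contraNF He0 => /eqP ->.
rewrite (bigD1 e0) /=; last exact: (fintype.subsetP sSp).
by move: He0; rewrite inE e0S andbT => /negbTE ->; rewrite mul0r.
Qed.

Lemma er_prob_trace S T : T \subset S -> S \subset pairs n ->
  \sum_(E | E :&: S == T) er_prob q E = q ^+ #|T| * (1 - q) ^+ #|S :\: T|.
Proof.
move=> sTS sSp.
(* The sum over [E] factors over pairs: [H e b] weighs pair [e] being in [E] or not. *)
pose H e (b : bool) : R :=
  if e \in pairs n then (if b then q else 1 - q) *
     (if e \in S then (b == (e \in T))%:R else 1)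
  else (~~ b)%:R.
transitivity (\sum_(E : {set 'I_n * 'I_n}) \prod_e H e (e \in E)).
  rewrite big_mkcond; apply: eq_bigr => J _.
  rewrite -mulrb -mulr_natr; case sJ: (J \subset pairs n).
    rewrite /er_prob sJ -(prod_trace_indicator J sTS sSp) -big_split /=.
    rewrite [LHS]big_mkcond /=; apply: eq_bigr => e _.
    rewrite /H; case: ifP => // ep.
    by case eJ: (e \in J); rewrite /= ?eJ //; move: (fintype.subsetP sJ _ eJ); rewrite ep.
  rewrite /er_prob sJ mul0r.
  move/negbT: sJ => /fintype.subsetPn [e0 e0J e0p].
  by rewrite (bigD1 e0) //= /H (negbTE e0p) e0J mul0r.
transitivity (\prod_e (H e true + H e false)).
  rewrite bigA_distr; apply: eq_big => // J _; apply: eq_bigr => e _.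
  by case: (e \in J).
transitivity (\prod_(e in S) (if e \in T then q else 1 - q)).
  rewrite [RHS]big_mkcond; apply: eq_bigr => e _; rewrite /H.
  case: ifP => ep; last first.
    by rewrite add0r; case: ifP => // eS; move: (fintype.subsetP sSp _ eS); rewrite ep.
  case: ifP => eS; last by rewrite !mulr1 subrKC.
  by case: (e \in T); rewrite /= ?mulr1 ?mulr0 ?addr0 ?add0r.
rewrite (bigID (mem T)) /=.
rewrite (eq_bigr (fun=> q)); last by move=> e /andP[_ ->].
rewrite [X in _ * X](eq_bigr (fun=> 1 - q)); last by move=> e /andP[_]; case: ifP.
rewrite !prodr_const; congr (_ ^+ _ * _ ^+ _); apply: eq_card => e.
  by rewrite unfold_in /= andb_idl //; apply: (fintype.subsetP sTS).
by rewrite unfold_in /= finset.in_setD andbC.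
Qed.

Lemma er_prob_sum1 : \sum_(E : {set 'I_n * 'I_n}) er_prob q E = 1.
Proof.
have := er_prob_trace (finset.sub0set finset.set0) (finset.sub0set (pairs n)).
rewrite finset.setD0 finset.cards0 !expr0 mulr1 => <-.
by apply: eq_bigl => E; rewrite finset.setI0 eqxx.
Qed.

Lemma er_prob_trace1_ge S t : 0 <= q <= 1 -> t \in S -> S \subset pairs n ->
  q * (1 - q) ^+ #|S| <= \sum_(E | E :&: S == [set t]) er_prob q E.
Proof.
case/andP=> q0 q1 tS sSp.
rewrite er_prob_trace // ?finset.sub1set // finset.cards1 expr1.
rewrite ler_wpM2l // ler_wiXn2l ?subr_ge0 ?lerBlDr ?lerDl //.
by apply: subset_leq_card; apply: finset.subsetDl.
Qed.

End ErdosRenyi.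

Section TreeSize.
Local Open Scope nat_scope.
Variable D : nat.
Hypothesis D_gt1 : 1 < D.

Lemma KsizeE h : Ksize D h = \sum_(i < h.+1) D ^ i.
Proof.
rewrite /Ksize subn1 predn_exp subn1 mulKn //.
by rewrite -subn1 subn_gt0.
Qed.

Lemma KsizeS h : Ksize D h.+1 = Ksize D h + D ^ h.+1.
Proof. by rewrite !KsizeE big_ord_recr. Qed.

Lemma KsizeSl h : Ksize D h.+1 = 1 + D * Ksize D h.
Proof.
rewrite !KsizeE big_ord_recl expn0 big_distrr; congr (_ + _).
by apply: eq_bigr => i _; rewrite expnS.
Qed.

Lemma Ksize_gt0 h : 0 < Ksize D h.
Proof. by rewrite KsizeE big_ord_recl expn0 add1n. Qed.

Lemma dvdn_Ksize_pred h : D %| (Ksize D h).-1.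
Proof. by case: h => [|h]; rewrite ?KsizeSl ?add1n ?dvdn_mulr // KsizeE big_ord1. Qed.

Lemma Ksize_lt h : Ksize D h < D ^ h.+1.
Proof.
elim: h => [|h IHh]; first by rewrite KsizeE big_ord1 expn1.
by rewrite KsizeSl expnS; nia.
Qed.

End TreeSize.

Section CompleteTree.
Local Open Scope nat_scope.
Variables (D K : nat).
Implicit Types (a b l : 'I_K).

Lemma parent_proof l : l.-1 %/ D < K.
Proof. exact: leq_ltn_trans (leq_trans (leq_div _ _) (leq_pred _)) (ltn_ord l). Qed.

Definition parent l : 'I_K := Ordinal (parent_proof l).

(* In the BFS labelling the children of [a] are [a * D + 1], ..., [a * D + D];
   [first_leaf l] says that [l] is a leaf and the first child of its parent. *)
Definition first_leaf l : bool :=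
  [&& 0 < l, l.-1 %% D == 0 & K <= l * D + 1].

Lemma tree_edgeP a b : tree_edge D a b -> 0 < a /\ b = parent a.
Proof. by case/andP=> a0 /eqP eq_b; split=> //; apply: val_inj. Qed.

Lemma tree_edge_parent l : 0 < l -> tree_edge D l (parent l).
Proof. by move=> l0; rewrite /tree_edge l0 /=. Qed.

Lemma parent_lt l : 0 < l -> parent l < l.
Proof. by move=> l0; apply: leq_ltn_trans (leq_div _ _) _; rewrite prednK. Qed.

Lemma tree_edge_lt a b : tree_edge D a b -> b < a.
Proof. by case/tree_edgeP=> a0 ->; apply: parent_lt. Qed.

Lemma first_leafE l : first_leaf l -> val l = (parent l * D).+1.
Proof.
case/and3P=> l0 /eqP mod0 _ /=.
by rewrite -[LHS](prednK l0) [in LHS](divn_eq l.-1 D) mod0 addn0.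
Qed.

Lemma first_leaf_childless l a : first_leaf l -> ~~ tree_edge D a l.
Proof.
case/and3P=> _ _ leaf; apply/negP => /tree_edgeP[a0 /(congr1 val) /= eq_l].
have : l * D <= a.-1 by rewrite eq_l leq_divM.
by rewrite -ltnS prednK // => lt_a; have := ltn_ord a; nia.
Qed.

Lemma card_first_leaf h : 1 < D -> K = Ksize D h.+1 ->
  K <= 2 * D * #|[set l | first_leaf l]|.
Proof.
move=> D_gt1 eK; have D0 : 0 < D by apply: ltnW.
have lastP (j : 'I_(D ^ h)) : Ksize D h + D * j < K.
  by rewrite eK (KsizeS D_gt1) ltn_add2l expnS ltn_pmul2l.
pose g (j : 'I_(D ^ h)) : 'I_K := Ordinal (lastP j).
have g_inj : injective g.
  move=> j1 j2 /(congr1 val) /= /eqP; rewrite eqn_add2l eqn_pmul2l // => /eqP.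
  exact: ord_inj.
have g_leaf : g @: [set: 'I_(D ^ h)] \subset [set l | first_leaf l].
  apply/fintype.subsetP => _ /imsetP[j _ ->]; rewrite inE /first_leaf /=.
  apply/and3P; split; first exact: ltn_addr (Ksize_gt0 D_gt1 h).
    rewrite -[Ksize D h](prednK (Ksize_gt0 D_gt1 h)) addSn /=.
    by apply: dvdn_add (dvdn_Ksize_pred D_gt1 h) (dvdn_mulr _ (dvdnn D)).
  by rewrite eK (KsizeSl D_gt1); nia.
have := subset_leq_card g_leaf; rewrite card_imset // cardsT card_ord => card_g.
apply: leq_trans (_ : 2 * D * D ^ h <= _); last by rewrite leq_mul2l card_g orbT.
rewrite eK (KsizeS D_gt1) expnS -mulnA mul2n -addnn leq_add2r.
by apply: ltnW; rewrite -expnS; apply: Ksize_lt.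
Qed.

End CompleteTree.

Section Planting.
Local Open Scope group_scope.
Variables (n D K : nat).
Implicit Types (E : {set 'I_n * 'I_n}) (s : {ffun 'I_K -> 'I_n}) (t : {perm 'I_n}).

Definition relabel_emb t s : {ffun 'I_K -> 'I_n} := [ffun a => t (s a)].

Lemma mem_planted s a : s a \in planted_set s.
Proof. by apply/imsetP; exists a. Qed.

Lemma card_planted_set s : injective s -> #|planted_set s| = K.
Proof. by move=> s_inj; rewrite card_imset // cardsT card_ord. Qed.

Lemma planted_set_relabel t s x :
  (x \in planted_set (relabel_emb t s)) = (t^-1 x \in planted_set s).
Proof.
apply/imsetP/imsetP => [[a _ ->]|[a _ eq_x]]; exists a => //.
  by rewrite ffunE permK.
by rewrite ffunE -eq_x permKV.
Qed.

Lemma relabel_emb_inj t s : injective s -> injective (relabel_emb t s).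
Proof. by move=> s_inj a b; rewrite !ffunE => /perm_inj /s_inj. Qed.

Lemma relabel_embM t t' s : relabel_emb t' (relabel_emb t s) = relabel_emb (t * t') s.
Proof. by apply/ffunP => a; rewrite !ffunE permM. Qed.

Lemma relabel_emb1 s : relabel_emb 1 s = s.
Proof. by apply/ffunP => a; rewrite ffunE perm1. Qed.

Lemma planted_edges_relabel t s :
  planted_edges D (relabel_emb t s) = relabel t @: planted_edges D s.
Proof.
rewrite /planted_edges -imset_comp; apply: eq_imset => ab /=.
by rewrite !ffunE relabel_upair.
Qed.

Lemma planted_edges_sub s : injective s -> planted_edges D s \subset pairs n.
Proof.
move=> s_inj; apply/fintype.subsetP => e /imsetP[ab]; rewrite inE => /tree_edge_lt lt_ab ->.
by apply: upair_pairs; rewrite (inj_eq s_inj) neq_ltn lt_ab orbT.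
Qed.

End Planting.

Section GoodConfigurations.
Variables (n D K : nat).
Implicit Types (E : {set 'I_n * 'I_n}) (s : {ffun 'I_K -> 'I_n}) (l : 'I_K) (v : 'I_n).

(* Swapping [s l] and [v] fixes every pair outside this zone.  The pairs joining
   the parent of [l] to the outside of the planted set are included so that [v]
   is determined by [E], [s] and [l]. *)
Definition swap_zone s l v : {set 'I_n * 'I_n} :=
  [set e in pairs n | [|| touches (s l) e, touches v e |
     touches (s (parent D l)) e &&
     ((e.1 \notin planted_set s) || (e.2 \notin planted_set s))]].

Definition good E s l v : bool :=
  [&& injectiveb s, first_leaf D l, v \notin planted_set s, E \subset pairs n &
      E :&: swap_zone s l v == [set upair (s (parent D l)) v]].

Lemma swap_zone_sub s l v : swap_zone s l v \subset pairs n.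
Proof. by apply/fintype.subsetP => e; rewrite inE => /andP[]. Qed.

Lemma parent_edge_in_zone s l v : v \notin planted_set s ->
  upair (s (parent D l)) v \in swap_zone s l v.
Proof.
move=> v_out; have pv : s (parent D l) != v.
  by apply: contraNneq v_out => <-; apply: mem_planted.
by rewrite inE upair_pairs //= !touches_upair eqxx !orbT.
Qed.

Section Swap.
Variables (E : {set 'I_n * 'I_n}) (s : {ffun 'I_K -> 'I_n}) (l : 'I_K) (v : 'I_n).
Hypothesis gd : good E s l v.
Let x := s l.
Let p := s (parent D l).
Let t := tperm x v.

Lemma good_inj : injective s.
Proof. by case/and5P: gd => /injectiveP. Qed.

Lemma good_first_leaf : first_leaf D l.
Proof. by case/and5P: gd. Qed.

Lemma good_out : v \notin planted_set s.
Proof. by case/and5P: gd. Qed.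

Lemma good_sub : E \subset pairs n.
Proof. by case/and5P: gd. Qed.

Lemma good_zone : E :&: swap_zone s l v = [set upair p v].
Proof. by case/and5P: gd => _ _ _ _ /eqP. Qed.

Lemma good_graph_sub : E :|: planted_edges D s \subset pairs n.
Proof. by rewrite finset.subUset good_sub (planted_edges_sub _ good_inj). Qed.

Lemma good_leaf_out : x != v.
Proof. by apply: contraNneq good_out => <-; apply: mem_planted. Qed.

Lemma good_parent_out : p != v.
Proof. by apply: contraNneq good_out => <-; apply: mem_planted. Qed.

Lemma good_parent_leaf : p != x.
Proof.
rewrite (inj_eq good_inj); case/and3P: good_first_leaf => l0 _ _.
by rewrite neq_ltn parent_lt.
Qed.

Lemma tperm_parent : t p = p.
Proof. by rewrite tpermD // eq_sym ?good_parent_leaf ?good_parent_out. Qed.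

Lemma good_parent_edge : upair p v \in E.
Proof.
by have /setIP[] : upair p v \in E :&: swap_zone s l v by rewrite good_zone set11.
Qed.

Lemma good_zone_edge e : e \in E -> e \in swap_zone s l v -> e = upair p v.
Proof. by move=> eE eZ; apply/set1P; rewrite -good_zone inE eE. Qed.

Lemma graph_edge_at_leaf e :
  e \in E :|: planted_edges D s -> touches x e -> e = upair p x.
Proof.
case/setUP => [eE xe|/imsetP[[a b]]]; last rewrite inE /= => ab ->.
  have eZ : e \in swap_zone s l v by rewrite inE xe (fintype.subsetP good_sub).
  move: xe; rewrite (good_zone_edge eE eZ) touches_upair (negbTE good_parent_leaf).
  by rewrite eq_sym (negbTE good_leaf_out).
rewrite touches_upair !(inj_eq good_inj) => /orP[/eqP eq_a|/eqP eq_b].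
  by move: ab; rewrite eq_a => /tree_edgeP[_ ->]; rewrite upairC.
by move: ab; rewrite eq_b (negbTE (first_leaf_childless _ good_first_leaf)).
Qed.

Lemma graph_edge_at_out e :
  e \in E :|: planted_edges D s -> touches v e -> e = upair p v.
Proof.
case/setUP => [eE ve|/imsetP[[a b] _ ->]].
  by apply: good_zone_edge; rewrite // inE ve orbT (fintype.subsetP good_sub).
rewrite touches_upair => /orP[] /eqP eq_v; have := good_out;
  by rewrite -eq_v mem_planted.
Qed.

Lemma swap_zone_relabel :
  swap_zone (relabel_emb t s) l x = relabel t @: swap_zone s l v.
Proof.
apply/setP => e; rewrite mem_relabel ?swap_zone_sub // tpermV !inE.
rewrite -!in_pairs; case pe: (e \in pairs n) => //=; rewrite relabel_pairs //=.
rewrite !ffunE tperm_parent -/x tpermL !touches_relabel tpermV tpermL tpermR tperm_parent.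
rewrite /relabel (upair_or (fun z => z \notin planted_set s)).
by rewrite !planted_set_relabel tpermV orbCA.
Qed.

Lemma good_swap : good (relabel t @: E) (relabel_emb t s) l x.
Proof.
apply/and5P; split.
- by apply/injectiveP; apply: relabel_emb_inj good_inj.
- exact: good_first_leaf.
- by rewrite planted_set_relabel tpermV tpermL good_out.
- exact: relabel_sub good_sub.
rewrite swap_zone_relabel -imsetI; last first.
  move=> e1 e2 /(fintype.subsetP good_sub) p1 /(fintype.subsetP (swap_zone_sub _ _ _)) p2.
  exact: relabel_inj.
by rewrite good_zone imset_set1 relabel_upair ffunE tperm_parent tpermR.
Qed.

Lemma graph_relabel e :
  e \in E :|: planted_edges D s -> relabel t e \in E :|: planted_edges D s.
Proof.
move=> eG.
have [xe|xNe] := boolP (touches x e).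
  rewrite (graph_edge_at_leaf eG xe) relabel_upair tperm_parent tpermL.
  by rewrite inE good_parent_edge.
have [ve|vNe] := boolP (touches v e).
  rewrite (graph_edge_at_out eG ve) relabel_upair tperm_parent tpermR inE; apply/orP; right.
  apply/imsetP; exists (l, parent D l); last by rewrite upairC.
  by rewrite inE tree_edge_parent //; case/and3P: good_first_leaf.
by rewrite relabel_tperm_id // (fintype.subsetP good_graph_sub).
Qed.

Lemma graph_swap :
  relabel t @: E :|: planted_edges D (relabel_emb t s) = E :|: planted_edges D s.
Proof.
rewrite planted_edges_relabel -imsetU; apply/setP => e.
rewrite mem_relabel ?good_graph_sub // tpermV; apply/andP/idP => [[pe /graph_relabel]|eG].
  by have := relabelK t pe; rewrite tpermV => ->.
by rewrite (fintype.subsetP good_graph_sub) ?graph_relabel.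
Qed.

End Swap.

Lemma good_uniq_out E s l v1 v2 : good E s l v1 -> good E s l v2 -> v1 = v2.
Proof.
move=> g1 g2; have pv2 := good_parent_edge g2.
have /(good_zone_edge g1 pv2) /upairI // : upair (s (parent D l)) v2 \in swap_zone s l v1.
rewrite inE upair_pairs ?(good_parent_out g2) //= !touches_upair eqxx /=.
by rewrite (upair_or (fun z => z \notin planted_set s)) (good_out g2) !orbT.
Qed.

Lemma good_uniq_leaf E s l1 l2 v : good E s l1 v -> good E s l2 v -> l1 = l2.
Proof.
move=> g1 g2; have pv2 := good_parent_edge g2.
have /(good_zone_edge g1 pv2) : upair (s (parent D l2)) v \in swap_zone s l1 v.
  by rewrite inE upair_pairs ?(good_parent_out g2) //= !touches_upair eqxx !orbT.
rewrite upairC [RHS]upairC => /upairI /(good_inj g1) eq_par.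
apply: val_inj.
by rewrite (first_leafE (good_first_leaf g1)) (first_leafE (good_first_leaf g2)) eq_par.
Qed.

End GoodConfigurations.

Lemma card_swap_zone n D K (s : {ffun 'I_K -> 'I_n}) l v :
  (#|swap_zone D s l v| <= 6 * n)%N.
Proof.
apply: leq_trans (subset_leq_card (B := [set e | touches (s l) e] :|:
  [set e | touches v e] :|: [set e | touches (s (parent D l)) e]) _) _.
  apply/fintype.subsetP => e; rewrite !inE => /andP[_ /or3P[->|->|/andP[-> _]]];
    by rewrite ?orbT.
apply: leq_trans (leq_card_setU _ _) _.
apply: leq_trans (leq_add (leq_card_setU _ _) (leqnn _)) _.
by rewrite (_ : 6 * n = 2 * n + 2 * n + 2 * n)%N ?leq_add ?card_touches //; lia.
Qed.

Lemma good_prob_ge (R : realType) n D K (q : R) (s : {ffun 'I_K -> 'I_n}) l v :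
  0 <= q <= 1 -> injective s -> first_leaf D l -> v \notin planted_set s ->
  q * (1 - q) ^+ (6 * n) <= \sum_(E | good D E s l v) er_prob q E.
Proof.
move=> q01 s_inj leaf v_out; have /andP[q0 q1] := q01.
apply: le_trans (_ : q * (1 - q) ^+ #|swap_zone D s l v| <= _).
  by rewrite ler_wpM2l // ler_wiXn2l ?subr_ge0 ?lerBlDr ?lerDl // card_swap_zone.
apply: le_trans (er_prob_trace1_ge q01 (parent_edge_in_zone D l v_out)
  (swap_zone_sub D s l v)) _.
rewrite le_eqVlt; apply/orP; left; apply/eqP.
rewrite big_mkcond [RHS]big_mkcond; apply: eq_bigr => E _.
rewrite /good (introT (injectiveP _) s_inj) leaf v_out /=.
case sE: (E \subset pairs n) => /=; first by case: ifP.
by rewrite /er_prob sE; case: ifP.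
Qed.

Section Configurations.
Variables (n D K : nat).

Definition config := (({set 'I_n * 'I_n} * {ffun 'I_K -> 'I_n}) * ('I_K * 'I_n))%type.

Definition good_config (c : config) : bool :=
  let: ((E, s), (l, v)) := c in good D E s l v.

Definition swap_config (c : config) : config :=
  let: ((E, s), (l, v)) := c in
  let t := tperm (s l) v in ((relabel t @: E, relabel_emb t s), (l, s l)).

Lemma good_swap_config : {in good_config, forall c, good_config (swap_config c)}.
Proof. by case=> [[E s] [l v]]; apply: good_swap. Qed.

Lemma swap_configK : {in good_config, involutive swap_config}.
Proof.
case=> [[E s] [l v]] gd; rewrite /swap_config ffunE tpermL tpermC.
by rewrite relabel_setM relabel_embM tperm2 relabel_set1 ?relabel_emb1 ?(good_sub gd).
Qed.

Lemma sum_config (V : nmodType) (F : config -> V) :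
  \sum_(c : config) F c =
  \sum_(E : {set 'I_n * 'I_n}) \sum_(s : {ffun 'I_K -> 'I_n}) \sum_(l : 'I_K)
    \sum_(v : 'I_n) F ((E, s), (l, v)).
Proof.
rewrite [RHS]pair_big /=; under eq_bigr do rewrite pair_big /=.
by rewrite pair_big /=; apply: eq_bigr => [[[E s] [l v]]].
Qed.

Definition swap_errors (F : {set 'I_n}) (E : {set 'I_n * 'I_n})
    (s : {ffun 'I_K -> 'I_n}) : nat :=
  (\sum_(l : 'I_K) \sum_(v | good D E s l v) ((s l \notin F) + (v \in F)))%N.

(* In a good configuration [l] and [v] determine each other, so every missed
   planted vertex and every chosen outside vertex is counted at most once. *)
Lemma swap_errors_bound (F : {set 'I_n}) (E : {set 'I_n * 'I_n}) (s : {ffun 'I_K -> 'I_n}) :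
  injective s -> #|F| = K ->
  (2 * #|F :&: planted_set s| + swap_errors F E s <= 2 * K)%N.
Proof.
move=> s_inj card_F.
have in_F : #|F :&: planted_set s| = (\sum_(l : 'I_K) (s l \in F))%N.
  rewrite sum_bool_card -(card_imset _ s_inj); apply: eq_card => z.
  apply/setIP/imsetP => [[zF /imsetP[l _ eq_z]]|[l]].
    by exists l; rewrite // inE -eq_z.
  by rewrite inE => lF ->; split; last exact: mem_planted.
have leafs : (#|F :&: planted_set s| + \sum_(l : 'I_K) (s l \notin F) = K)%N.
  rewrite in_F -big_split /= -[RHS]card_ord -sum1_card.
  by apply: eq_bigr => l _; case: (s l \in F).
have outs : (\sum_l \sum_(v | good D E s l v) (v \in F) <= #|F :\: planted_set s|)%N.
  rewrite (exchange_big_dep xpredT) //= -sum_bool_card; apply: leq_sum => v _.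
  case: (boolP (v \in planted_set s)) => [vK|vK] /=.
    by rewrite big_pred0 // => l; apply: contraTF vK => /good_out.
  by apply: leq_sum_uniq => l1 l2 /= g1 g2; apply: good_uniq_leaf g1 g2.
have leaf_err : (\sum_l \sum_(v | good D E s l v) (s l \notin F)
                 <= \sum_(l : 'I_K) (s l \notin F))%N.
  by apply: leq_sum => l _; apply: leq_sum_uniq => v1 v2; apply: good_uniq_out.
have := cardsID (planted_set s) F; rewrite card_F.
rewrite /swap_errors; under eq_bigr do rewrite big_split /=; rewrite big_split /=.
move=> parts; apply: leq_trans (leq_add (leqnn _) (leq_add leaf_err outs)) _.
by rewrite !mul2n -!addnn addnACA leafs parts.
Qed.

End Configurations.

Lemma card_injs_gt0 n K : (K <= n)%N -> (0 < #|injs n K|)%N.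
Proof.
move=> K_le_n; apply/card_gt0P; exists [ffun a => widen_ord K_le_n a].
by rewrite inE; apply/injectiveP => a b; rewrite !ffunE => /(congr1 val) /= /ord_inj.
Qed.

Section GoodMass.
Variables (R : realType) (n D K : nat) (q : R).
Hypothesis q01 : 0 <= q <= 1.

Definition good_mass : R := \sum_(c : config n K | good_config D c) er_prob q c.1.1.

Lemma good_mass_ge :
  #|injs n K|%:R * (#|[set l : 'I_K | first_leaf D l]|%:R
                     * ((n - K)%N%:R * (q * (1 - q) ^+ (6 * n))))
  <= good_mass.
Proof.
pose w (c : config n K) := if good_config D c then er_prob q c.1.1 else 0.
have w0 (c : config n K) : 0 <= w c by rewrite /w; case: ifP => // _; apply: er_prob_ge0.
rewrite /good_mass big_mkcond -/w sum_config exchange_big /=.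
under eq_bigr do rewrite exchange_big /=.
under eq_bigr do under eq_bigr do rewrite exchange_big /=.
apply: le_trans
  (_ : _ <= \sum_(s in injs n K) \sum_l \sum_v \sum_E w ((E, s), (l, v))) _; last first.
  rewrite [leRHS](bigID (mem (injs n K))) /= lerDl.
  by do 4 (apply: sumr_ge0 => ? _); case: ifP => // _; apply: er_prob_ge0.
rewrite mulr_natl -sumr_const; apply: ler_sum => s; rewrite inE => /injectiveP s_inj.
have out_card : #|[set v | v \notin planted_set s]| = (n - K)%N.
  have := cardsC (planted_set s); rewrite card_planted_set // card_ord => eq_n.
  by rewrite -[in RHS]eq_n addKn.
rewrite -sumr_if_const; apply: ler_sum => l _.
case: ifP => [leaf|_]; last by do 2 (apply: sumr_ge0 => ? _); apply: w0.
rewrite -out_card -sumr_if_const; apply: ler_sum => v _.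
case: ifP => [v_out|_]; last by apply: sumr_ge0 => ? _; apply: w0.
by rewrite /w -big_mkcond /=; apply: good_prob_ge.
Qed.

End GoodMass.

Section SwapErrors.
Variables (R : realType) (n D K : nat) (lam : R) (f : {set 'I_n * 'I_n} -> {set 'I_n}).
Let q := lam / n%:R.
Let errors E (s : {ffun 'I_K -> 'I_n}) := swap_errors D (f (E :|: planted_edges D s)) E s.

Definition config_errors (c : config n K) : nat :=
  let: ((E, s), (l, v)) := c in
  let F := f (E :|: planted_edges D s) in ((s l \notin F) + (v \in F))%N.

Lemma sum_swap_errors :
  \sum_(E : {set 'I_n * 'I_n}) \sum_(s in injs n K)
    er_prob q E * (errors E s)%:R = good_mass n D K q.
Proof.
transitivity
  (\sum_(c : config n K | good_config D c) er_prob q c.1.1 * (config_errors c)%:R).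
  rewrite [RHS]big_mkcond sum_config; apply: eq_bigr => E _.
  rewrite [LHS]big_mkcond; apply: eq_bigr => s _ /=; case: ifP => [_|s_inj].
    rewrite natr_sum mulr_sumr; apply: eq_bigr => l _.
    by rewrite natr_sum mulr_sumr [LHS]big_mkcond; apply: eq_bigr => v _; case: ifP.
  symmetry; apply: big1 => l _; apply: big1 => v _; case: ifP => // /and5P[s_inj' _ _ _ _].
  by move: s_inj; rewrite inE s_inj'.
(* The swap preserves the law of G_0 and the graph G while exchanging the roles
   of [s l] and [v], so the errors at a configuration and at its swap add up to 2. *)
apply: sum_involution => [c|c|[[E s] [l v]] gd|[[E s] [l v]] gd] /=.
- exact: good_swap_config.
- exact: swap_configK.
- by rewrite er_prob_relabel // (good_sub gd).
rewrite /swap_config /= graph_swap // ffunE tpermL -natrD.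
by case: (s l \in _); case: (v \in _).
Qed.

Lemma overlap_le_good_mass : (K <= n)%N -> (forall E, #|f E| = K) -> 0 <= q <= 1 ->
  overlap D K lam f <= K%:R - good_mass n D K q / (2 * #|injs n K|%:R).
Proof.
move=> Kn f_card q01; set c : R := #|injs n K|%:R.
have c_gt0 : 0 < c by rewrite ltr0n card_injs_gt0.
have mass1 : \sum_(E : {set 'I_n * 'I_n}) \sum_(s in injs n K) er_prob q E / c = 1.
  rewrite -(er_prob_sum1 n q); apply: eq_bigr => E _.
  by rewrite sumr_const -mulr_natr mulrAC -mulrA divff ?mulr1 // gt_eqF.
have -> : K%:R - good_mass n D K q / (2 * c)
    = K%:R * (\sum_(E : {set 'I_n * 'I_n}) \sum_(s in injs n K) er_prob q E / c)
      - (\sum_(E : {set 'I_n * 'I_n}) \sum_(s in injs n K) er_prob q E * (errors E s)%:R)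
        / (2 * c).
  by rewrite mass1 mulr1 sum_swap_errors.
rewrite mulr_sumr mulr_suml -sumrB.
apply: ler_sum => E _; rewrite mulr_sumr mulr_suml -sumrB; apply: ler_sum => s.
rewrite inE => /injectiveP s_inj; set F := f _.
have bound : 2 * #|F :&: planted_set s|%:R + (swap_errors D F E s)%:R <= 2 * K%:R :> R.
  by rewrite -!natrM -natrD ler_nat; apply: swap_errors_bound s_inj (f_card _).
have w0 : 0 <= er_prob q E / c by rewrite divr_ge0 ?(er_prob_ge0 _ q01) ?ltW.
rewrite [leRHS](_ : _ = er_prob q E / c * (K%:R - (swap_errors D F E s)%:R / 2)).
  by apply: ler_wpM2l => //; lra.
by field; rewrite gt_eqF.
Qed.

End SwapErrors.

Lemma overlap_bound (R : realType) (n D h K : nat) (lam : R)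
    (f : {set 'I_n * 'I_n} -> {set 'I_n}) :
  (1 < D)%N -> K = Ksize D h.+1 -> (2 * K <= n)%N -> 0 < lam -> 2 * lam <= n%:R ->
  (forall E, #|f E| = K) ->
  overlap D K lam f <= (1 - lam * expR (- (12 * lam)) / (8 * D%:R)) * K%:R.
Proof.
move=> D_gt1 eK Kn lam_gt0 lam_n f_card.
have n_gt0 : (0 : R) < n%:R by lra.
have D_gt0 : (0 : R) < D%:R by rewrite ltr0n ltnW.
have K_le_n : (K <= n)%N by apply: leq_trans Kn; rewrite leq_pmull.
set q := lam / n%:R; set e := expR (- (12 * lam)).
have q_ge0 : 0 <= q by rewrite divr_ge0 // ltW.
have q_half : q <= 1 / 2 by rewrite ler_pdivrMr //; lra.
have q01 : 0 <= q <= 1 by rewrite q_ge0 /=; lra.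
have lamE : lam = n%:R * q by rewrite mulrC divfK // gt_eqF.
set L : R := #|[set l : 'I_K | first_leaf D l]|%:R.
set beta := q * (1 - q) ^+ (6 * n).
have leaves : K%:R <= 2 * D%:R * L by rewrite -!natrM ler_nat (card_first_leaf D_gt1 eK).
have outside : n%:R <= 2 * (n - K)%N%:R :> R.
  by move: Kn; rewrite -(ler_nat R) natrB // natrM; lra.
have beta_ge : q * e <= beta.
  rewrite ler_wpM2l // /e (_ : 12 * lam = 2 * q * (6 * n)%:R).
    by apply: expR_le_pow; rewrite q_ge0.
  by rewrite lamE natrM; ring.
have e_ge0 : 0 <= e by apply: expR_ge0.
have key : K%:R * (lam * e) <= 4 * D%:R * (L * ((n - K)%N%:R * beta)).
  have lam_e : lam * e <= 2 * (n - K)%N%:R * beta.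
    rewrite lamE -mulrA.
    by apply: ler_pM; [exact: ler0n|exact: mulr_ge0|exact: outside|exact: beta_ge].
  apply: le_trans (ler_pM (ler0n _ K) (mulr_ge0 (ltW lam_gt0) e_ge0) leaves lam_e) _.
  by rewrite [leRHS](_ : _ = 2 * D%:R * L * (2 * (n - K)%N%:R * beta)) //; ring.
have c_gt0 : (0 : R) < #|injs n K|%:R by rewrite ltr0n card_injs_gt0.
apply: le_trans (overlap_le_good_mass D K_le_n f_card q01) _.
have := good_mass_ge n D K q01; rewrite -/beta -/L; set X := L * _ => mass.
rewrite mulrBl mul1r lerD2l lerN2.
apply: le_trans (_ : _ <= #|injs n K|%:R * X / (2 * #|injs n K|%:R)) _; last first.
  by rewrite ler_pM2r ?invr_gt0 ?mulr_gt0.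
rewrite [leRHS](_ : _ = X / 2); last by field; rewrite gt_eqF.
rewrite mulrAC ler_pdivrMr ?mulr_gt0 // mulrC.
by rewrite [leRHS](_ : _ = 4 * D%:R * X) //; field.
Qed.

Local Open Scope classical_set_scope.

Theorem theorem11 (R : realType) (D : nat) (lam : R) (h : nat -> nat) :
  (2 <= D)%N -> 0 < lam ->
  (exists N0 : nat, forall n : nat, (N0 <= n)%N ->
     exists h' : nat, [/\ (0 < h')%N, (h' <= h n)%N & ptree lam D h' < n%:R^-1]) ->
  (((Ksize D (h n))%:R / n%:R : R) @[n --> \oo] --> 0) ->
  exists delta : R, 0 < delta /\
    exists N : nat, forall n : nat, (N <= n)%N ->
      forall f : {set 'I_n * 'I_n} -> {set 'I_n},
        (forall E, #|f E| = Ksize D (h n)) ->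
        overlap D (Ksize D (h n)) lam f <= (1 - delta) * (Ksize D (h n))%:R.
Proof.
move=> D_ge2 lam_gt0 [N0 depth_pos] /cvgrPdist_le /(_ (1 / 2) ltac:(lra)) [N1 _ K_small].
exists (lam * expR (- (12 * lam)) / (8 * D%:R)); split.
  by rewrite divr_gt0 ?mulr_gt0 ?expR_gt0 // ltr0n ltnW.
exists (maxn (maxn N0 N1) (maxn 1 (Num.truncn (2 * lam)).+1)) => n.
rewrite !geq_max => /andP[/andP[n_N0 n_N1] /andP[n_gt0 n_lam]] f f_card.
have [h' [h'_gt0 h'_le _]] := depth_pos n n_N0.
have n_pos : (0 : R) < n%:R by rewrite ltr0n.
have K_half : (2 * Ksize D (h n) <= n)%N.
  have := K_small n n_N1; rewrite /= sub0r normrN ger0_norm ?divr_ge0 // ler_pdivrMr //.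
  by rewrite -(ler_nat R) natrM; lra.
apply: (overlap_bound (h := (h n).-1)) => //.
- by rewrite prednK //; apply: leq_trans h'_le.
- by have := truncnS_gt (2 * lam); move: n_lam; rewrite -(ler_nat R); lra.
Qed.
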